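(* Let $p$ be an odd prime, $q$ a power of $p$, and $n\ge 0$ an integer. Let $f_n(x)=\sum_{j\ge 0}\binom{n}{2j+1}x^j$. Then in $\mathbb{F}_q[x]$, $$F_n(1,x)=\left(\tfrac12\right)^{n-1}f_n(1-4x).$$ In particular, $F_n(1,x)$ is a permutation polynomial of $\mathbb{F}_q$ if and only if $f_n(x)$ is a permutation polynomial of $\mathbb{F}_q$.
   Context: For an integer $n\ge 1$, the $n$-th reversed Dickson polynomial of the third kind is $F_n(a,x)=\sum_{i=0}^{\lfloor n/2\rfloor}\frac{n-2i}{n-i}\binom{n-i}{i}(-x)^i a^{n-2i}$, where each coefficient $\frac{n-2i}{n-i}\binom{n-i}{i}$ is an integer (read in $\mathbb{F}_q$), and $F_0(a,x)=0$. A polynomial $f\in\mathbb{F}_q[x]$ is a permutation polynomial of $\mathbb{F}_q$ if $c\mapsto f(c)$ is a bijection of $\mathbb{F}_q$. *)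

From HB Require Import structures.
From mathcomp Require Import all_boot all_order all_algebra all_field.
Set Implicit Arguments. Unset Strict Implicit. Unset Printing Implicit Defensive.
Import GRing.Theory.
Local Open Scope ring_scope.

(* integer coefficient (n-2i)/(n-i) * C(n-i,i), computed exactly in nat *)
Definition dickson3_coef (n i : nat) : nat :=
  ((n - i.*2) * 'C(n - i, i)) %/ (n - i).

(* n-th reversed Dickson polynomial of the third kind, F_n(a, x), as a
   polynomial in x over R; F_0 = 0 *)
Definition revDickson3 (R : comNzRingType) (n : nat) (a : R) : {poly R} :=
  if n == 0%N then 0 else
  \sum_(i < n./2.+1)
     ((dickson3_coef n i)%:R * a ^+ (n - i.*2)) *: ('X * (-1)%:P) ^+ i.

(* f_n(x) = sum_{j >= 0} C(n, 2j+1) x^j  (terms with 2j+1 > n vanish) *)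
Definition fpoly (R : comNzRingType) (n : nat) : {poly R} :=
  \sum_(j < n) ('C(n, j.*2.+1))%:R *: 'X^j.

Definition is_perm_poly (F : finFieldType) (f : {poly F}) : Prop :=
  bijective (fun c : F => f.[c]).

From mathcomp Require Import all_boot all_order all_algebra all_field.
From mathcomp Require Import zify ring.
Import GRing.Theory.
Local Open Scope ring_scope.

(* Both sides satisfy the same three-term recurrence: on coefficients,
   F_{n+2}(1, x) = F_{n+1}(1, x) - x F_n(1, x) (Pascal's rule on C(n-1-i, i)),
   while f_{n+2} = 2 f_{n+1} + (x - 1) f_n (Pascal's rule twice).  Substituting
   x := 1 - 4x in the second turns it into the first scaled by 2, so
   2^n F_{n+1}(1, x) = f_{n+1}(1 - 4x) follows by induction from n = 0, 1.
   Scaling by a unit and composing with an invertible affine map preserve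
   permutation polynomials, and 2 is a unit in odd characteristic. *)

Lemma dickson3_coefE n i : (0 < n)%N -> (i <= n./2)%N ->
  dickson3_coef n i = 'C(n.-1 - i, i).
Proof.
move=> n_gt0 le_i_half; rewrite /dickson3_coef.
have n_i_gt0 : (0 < n - i)%N by have := odd_double_half n; lia.
have -> : (n - i.*2 = (n - i) - i)%N by rewrite -addnn; lia.
by rewrite -mul_bin_down mulKn //; congr 'C(_, _); lia.
Qed.

Section Recurrences.
Variable R : comNzRingType.

Lemma coef_revDickson3_1 n i : (0 < n)%N ->
  (revDickson3 n (1 : R))`_i = (-1) ^+ i * ('C(n.-1 - i, i))%:R.
Proof.
move=> n_gt0; rewrite /revDickson3 (negPf (lt0n_neq0 n_gt0)).
have signX k : ('X * (-1)%:P) ^+ k = (-1) ^+ k *: 'X^k :> {poly R}.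
  by rewrite -mul_polyC polyC_exp polyCN polyC1 mulrN1 exprNn.
under eq_bigr => k _ do rewrite signX scalerA expr1n mulr1.
rewrite -(poly_def _ (fun k => (dickson3_coef n k)%:R * (-1) ^+ k)) coef_poly ltnS.
case: leqP => [le_i_half | lt_half_i]; first by rewrite dickson3_coefE // mulrC.
by rewrite bin_small ?mulr0 //; have := odd_double_half n; lia.
Qed.

Lemma coef_fpoly n j : (fpoly R n)`_j = ('C(n, j.*2.+1))%:R.
Proof.
rewrite /fpoly -(poly_def _ (fun j => ('C(n, j.*2.+1))%:R)) coef_poly.
by case: ltnP => // le_n_j; rewrite bin_small //; lia.
Qed.

Lemma revDickson3_1_rec m :
  revDickson3 m.+3 (1 : R) = revDickson3 m.+2 1 - 'X * revDickson3 m.+1 1.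
Proof.
apply/eqP; rewrite eq_sym subr_eq; apply/eqP/polyP => i.
rewrite coefD coefXM !coef_revDickson3_1 //=.
case: i => [|k] /=; first by rewrite !subn0 !bin0 addr0.
have -> : (m.+2 - k.+1 = m.+1 - k)%N by lia.
have -> : (m.+1 - k.+1 = m - k)%N by lia.
have -> : ('C(m.+1 - k, k.+1) = 'C(m - k, k.+1) + 'C(m - k, k))%N.
  case: (leqP k m) => [le_k_m | lt_m_k].
    by rewrite (_ : m.+1 - k = (m - k).+1)%N ?binS //; lia.
  by rewrite (_ : m.+1 - k = 0)%N 1?(_ : m - k = 0)%N ?bin0n //; [case: k lt_m_k | lia | lia].
by rewrite natrD exprS; ring.
Qed.

Lemma fpoly_rec n : fpoly R n.+2 = fpoly R n.+1 *+ 2 + ('X - 1) * fpoly R n.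
Proof.
have pascal2 : fpoly R n.+2 + fpoly R n = fpoly R n.+1 *+ 2 + 'X * fpoly R n.
  apply/polyP => j; rewrite !(coefD, coefMn, coefXM, coef_fpoly).
  case: j => [|k] /=; first by rewrite !bin1 addr0 mulr2n -!natrD; congr _%:R; lia.
  by rewrite !doubleS !binS mulr2n -!natrD; congr _%:R; lia.
by rewrite mulrBl mul1r addrA -pascal2 addrK.
Qed.

Lemma revDickson3_1_1 : revDickson3 1 (1 : R) = 1.
Proof.
apply/polyP => i; rewrite coef_revDickson3_1 // coef1.
by case: i => [|[|i]] /=; rewrite ?bin0n ?mulr0 ?mulr1.
Qed.

Lemma revDickson3_1_2 : revDickson3 2 (1 : R) = 1.
Proof.
apply/polyP => i; rewrite coef_revDickson3_1 // coef1.
by case: i => [|[|i]] /=; rewrite ?bin0n ?mulr0 ?mulr1.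
Qed.

Lemma fpoly1 : fpoly R 1 = 1.
Proof. by apply/polyP => i; rewrite coef_fpoly coef1; case: i => [|i] //=; rewrite bin_small. Qed.

Lemma fpoly2 : fpoly R 2 = (2 : R)%:P.
Proof.
apply/polyP => i; rewrite coef_fpoly coefC.
by case: i => [|i] //=; rewrite bin_small.
Qed.

Lemma fpoly_comp_revDickson3_1 n :
  fpoly R n.+1 \Po (1 - 4%:R *: 'X) = 2 ^+ n *: revDickson3 n.+1 (1 : R).
Proof.
set q := 1 - 4%:R *: 'X.
suff : fpoly R n.+1 \Po q = 2 ^+ n *: revDickson3 n.+1 1 /\
       fpoly R n.+2 \Po q = 2 ^+ n.+1 *: revDickson3 n.+2 1 by case.
elim: n => [|n [IHn IHn1]].
  rewrite revDickson3_1_1 revDickson3_1_2 fpoly1 fpoly2 -polyC1 !comp_polyC.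
  by rewrite expr0 expr1 !alg_polyC.
split=> //.
rewrite fpoly_rec mulr2n !comp_polyD comp_polyM comp_polyB comp_polyX comp_polyC IHn IHn1.
rewrite revDickson3_1_rec /q -!mul_polyC !polyC_exp polyC1 !polyC_natr.
by rewrite !exprS; ring.
Qed.

End Recurrences.

Section PermutationPolynomials.
Variable F : finFieldType.

Lemma perm_polyE (f : {poly F}) : is_perm_poly f <-> injective (horner f).
Proof. by split=> [/bij_inj | /injF_bij]. Qed.

Lemma perm_polyZ (c : F) (f : {poly F}) :
  c != 0 -> is_perm_poly (c *: f) <-> is_perm_poly f.
Proof.
move=> c_neq0; rewrite !perm_polyE; split=> f_inj x y; last first.
  by rewrite !hornerZ => /(mulfI c_neq0)/f_inj.
by move=> fxy; apply: f_inj; rewrite !hornerZ fxy.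
Qed.

Lemma perm_poly_comp (f g : {poly F}) :
  is_perm_poly g -> is_perm_poly (f \Po g) <-> is_perm_poly f.
Proof.
move=> [ginv gK ginvK]; rewrite !perm_polyE.
split=> f_inj x y; last by rewrite !horner_comp => /f_inj/(can_inj gK).
by rewrite -(ginvK x) -(ginvK y) -!horner_comp => /f_inj ->.
Qed.

Lemma perm_poly_affine (a b : F) : a != 0 -> is_perm_poly (b%:P + a *: 'X).
Proof.
move=> a_neq0; apply/perm_polyE => x y.
by rewrite !hornerE => /addrI/(mulfI a_neq0).
Qed.

End PermutationPolynomials.

Lemma pchar_odd_two_neq0 {R : nzRingType} {p : nat} :
  prime p -> odd p -> p \in [pchar R] -> (2 : R) != 0.
Proof.
move=> p_pr p_odd pcharRp; rewrite -(dvdn_pcharf pcharRp) (dvdn_prime2 p_pr) //.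
by apply: contraTN p_odd => /eqP ->.
Qed.

Theorem proposition3p2 (F : finFieldType) (p : nat)
  (hp : prime p) (hodd : odd p) (hchar : p \in [pchar F]) (n : nat) :
  revDickson3 n (1 : F) =
    ((2 : F)^-1 ^ (n%:Z - 1)) *: (fpoly F n \Po (1 - 4%:R *: 'X))
  /\ (is_perm_poly (revDickson3 n (1 : F)) <-> is_perm_poly (fpoly F n)).
Proof.
have two_neq0 := pchar_odd_two_neq0 hp hodd hchar.
have revE : revDickson3 n (1 : F) =
    ((2 : F)^-1 ^ (n%:Z - 1)) *: (fpoly F n \Po (1 - 4%:R *: 'X)).
  case: n => [|m]; first by rewrite /revDickson3 /fpoly big_ord0 comp_poly0 scaler0.
  have -> : m.+1%:Z - 1 = m%:Z by rewrite intS addrC addKr.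
  rewrite fpoly_comp_revDickson3_1 scalerA (_ : (2 : F)^-1 ^ m%:Z = 2^-1 ^+ m) //.
  by rewrite exprVn mulVf ?scale1r ?expf_neq0.
have c_neq0 : (2 : F)^-1 ^ (n%:Z - 1) != 0 by rewrite expfz_neq0 // invr_eq0.
split=> //; rewrite revE perm_polyZ // perm_poly_comp //.
have -> : 1 - 4%:R *: 'X = (1 : F)%:P + (- 4%:R) *: 'X :> {poly F} by rewrite scaleNr.
apply: perm_poly_affine; rewrite oppr_eq0 (_ : 4%:R = 2 * 2 :> F) ?mulf_neq0 //.
by rewrite -natrM.
Qed.
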